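(* Let $X$ be a real Banach space such that $X^*$ and $X^{**}$ are strictly convex, $X$ has the w-Kadec-Klee property and $X^*$ has the $w^*$-Kadec-Klee property. Let $v\in X\setminus\{0\}$, let $(t_i)_{i\in I}$ be a net of positive reals with $t_i\to0$, and let $(w_i)_{i\in I}\subset X$. If there is a net $(z_i^* )_{i\in I}\subset X^*$ with $z_i^*\in J_{t_i}(w_i)$ for all $i$ and $\|z_i^*-J(v)\|\to0$, then some subnet of $(w_i)_{i\in I}$ converges in norm to $v$.
   Context: For $\varepsilon\ge0$, $J_\varepsilon(w):=\{w^*\in X^*: \tfrac12\|y\|^2+\varepsilon\ge \tfrac12\|w\|^2+\langle w^*,y-w\rangle\ \forall y\in X\}$, and $J=J_0$ is the duality mapping, single-valued since $X^*$ is strictly convex. $X$ has the w-Kadec-Klee property if every net with $x_i\to x$ weakly and $\|x_i\|\to\|x\|$ converges in norm; $X^*$ has the $w^*$-Kadec-Klee property if every net with $x_i^*\to x^*$ weak$^*$ and $\|x_i^*\|\to\|x^*\|$ converges in norm. *)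

From HB Require Import structures.
From mathcomp Require Import all_boot all_order all_algebra.
From mathcomp Require Import all_classical all_reals all_analysis.
Set Implicit Arguments. Unset Strict Implicit. Unset Printing Implicit Defensive.
Import Order.TTheory GRing.Theory Num.Theory.
Import numFieldNormedType.Exports.
Local Open Scope classical_set_scope.
Local Open Scope ring_scope.

Record dirset := DirSet {
  dcar :> Type;
  dle : dcar -> dcar -> Prop;
  dle_refl : forall i, dle i i;
  dle_trans : forall i j k, dle i j -> dle j k -> dle i k;
  dle_directed : forall i j, exists k, dle i k /\ dle j k;
  d_inhabited : inhabited dcar }.

Definition net_cvg {R : realType} (D : dirset) (u : D -> R) (l : R) : Prop :=
  forall e : R, 0 < e -> exists i0 : D, forall i, dle i0 i -> `|u i - l| < e.

(* Willard subnet: (w \o phi) with phi : J -> I eventually above every i0 *)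
Definition cofinal_map (J I : dirset) (phi : J -> I) : Prop :=
  forall i0 : I, exists j0 : J, forall j, dle j0 j -> dle i0 (phi j).

Section Banach.
Context {R : realType} {X : normedModType R}.

Definition is_dual (f : X -> R) : Prop :=
  (forall (a : R) (x y : X), f (a *: x + y) = a * f x + f y) /\ continuous f.

Definition dnorm (f : X -> R) : R :=
  sup [set `|f x| | x in [set x : X | `|x| <= 1]].

Definition is_bidual (phi : (X -> R) -> R) : Prop :=
  (forall (a : R) (f g : X -> R), is_dual f -> is_dual g ->
      phi (fun x => a * f x + g x) = a * phi f + phi g) /\
  (exists M : R, forall f, is_dual f -> `|phi f| <= M * dnorm f).

Definition bnorm (phi : (X -> R) -> R) : R :=
  sup [set `|phi f| | f in [set f | is_dual f /\ dnorm f <= 1]].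

Definition dual_strictly_convex : Prop :=
  forall f g : X -> R, is_dual f -> is_dual g ->
    dnorm f = 1 -> dnorm g = 1 -> dnorm (fun x => f x + g x) = 2 -> f = g.

(* elements of X^** are identified when they agree on X^* *)
Definition bidual_strictly_convex : Prop :=
  forall phi psi : (X -> R) -> R, is_bidual phi -> is_bidual psi ->
    bnorm phi = 1 -> bnorm psi = 1 -> bnorm (fun f => phi f + psi f) = 2 ->
    forall f, is_dual f -> phi f = psi f.

Definition w_Kadec_Klee : Prop :=
  forall (D : dirset) (x : D -> X) (x0 : X),
    (forall f, is_dual f -> net_cvg (fun i => f (x i)) (f x0)) ->
    net_cvg (fun i => `|x i|) `|x0| ->
    net_cvg (fun i => `|x i - x0|) 0.

Definition wstar_Kadec_Klee : Prop :=
  forall (D : dirset) (f : D -> X -> R) (f0 : X -> R),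
    (forall i, is_dual (f i)) -> is_dual f0 ->
    (forall x : X, net_cvg (fun i => f i x) (f0 x)) ->
    net_cvg (fun i => dnorm (f i)) (dnorm f0) ->
    net_cvg (fun i => dnorm (fun x => f i x - f0 x)) 0.

(* ---------- epsilon-subdifferential of 1/2 ||.||^2 ---------- *)
Definition Jeps (eps : R) (w : X) (ws : X -> R) : Prop :=
  is_dual ws /\
  forall y : X, `|y| ^+ 2 / 2 + eps >= `|w| ^+ 2 / 2 + ws (y - w).

End Banach.

(* Testing the inequality defining [z_i \in J_(t_i)(w_i)] at [v], and comparing
   [z_i] with [J v] through [|z_i - J v| -> 0], forces [|w_i| -> |v|] and
   [<J v, w_i> -> |v|^2].  Along any ultrafilter refining the tails of the net, the
   bounded values [f (w_i)] converge to a linear functional [Phi] on [X^*] with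
   [|Phi| <= |v|] and [Phi (J v) = |v|^2]; then [Phi / |v|] and the evaluation at
   [v / |v|] are unit vectors of [X^**] whose sum has norm 2, so strict convexity of
   [X^**] makes [Phi] the evaluation at [v].  Hence [w_i -> v] weakly, and the
   w-Kadec-Klee property of [X] upgrades this to norm convergence of the net itself. *)

From HB Require Import structures.
From mathcomp Require Import all_boot all_order all_algebra.
From mathcomp Require Import all_classical all_reals all_analysis.
From mathcomp Require Import lra.
Import Order.TTheory GRing.Theory Num.Theory.
Import numFieldNormedType.Exports.
Local Open Scope classical_set_scope.
Local Open Scope ring_scope.

Definition tails (D : dirset) : set_system D :=
  filter_from setT (fun i0 => [set i | dle i0 i]).

Global Instance tails_proper {D : dirset} : ProperFilter (tails D).
Proof.
apply: filter_from_proper => [|i _]; last by exists i; exact: dle_refl.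
apply: filter_fromT_filter => [|i j]; first by case: (d_inhabited D) => i; exists i.
have [k [ik jk]] := dle_directed i j.
by exists k => l /= kl; split; exact: dle_trans kl.
Qed.

Lemma net_cvgE {R : realType} {D : dirset} (u : D -> R) (l : R) :
  net_cvg u l <-> u @ tails D --> l.
Proof.
split=> [ul | /cvgrPdist_lt ul e e0].
  apply/cvgrPdist_lt => e e0; have [i0 Hi0] := ul e e0.
  by exists i0 => // i /Hi0; rewrite distrC.
have [i0 _ Hi0] := ul e e0.
by exists i0 => i /Hi0 /=; rewrite distrC.
Qed.

Set Implicit Arguments.
Unset Strict Implicit.

Lemma ler_addgt0Mr {R : realFieldType} (c d k : R) :
  0 <= k -> (forall s, 0 < s -> c <= d + s * k) -> c <= d.
Proof.
move=> k0 cdk; apply/ler_addgt0Pr => e e0.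
have k1 : 0 < k + 1 by rewrite ltr_wpDl.
apply: le_trans (cdk _ (divr_gt0 e0 k1)) _; rewrite lerD2l -mulrA ger_pMr // mulrC.
by rewrite ler_pdivrMr // mul1r lerDl.
Qed.

Lemma cvg0_of_sq_le {R : realFieldType} {T : Type} (F : set_system T) {FF : Filter F}
    (u p : T -> R) :
  (forall i, 0 <= u i) -> (forall i, 0 <= p i) ->
  (forall i, u i ^+ 2 <= p i * (1 + u i)) -> p @ F --> 0 -> u @ F --> 0.
Proof.
move=> u0 p_ge0 up /cvgrPdist_lt p0; apply/cvgrPdist_lt => e e0.
have e2 : 0 < e / 2 by rewrite divr_gt0.
have ee2 : 0 < e ^+ 2 / 2 by rewrite divr_gt0 ?exprn_gt0.
near=> i; rewrite sub0r normrN ger0_norm // ltNge; apply/negP => eu.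
have /ltr_normlW pe : `|p i| < e / 2.
  by near: i; apply: filterS (p0 _ e2) => j; rewrite sub0r normrN.
have /ltr_normlW pee : `|p i| < e ^+ 2 / 2.
  by near: i; apply: filterS (p0 _ ee2) => j; rewrite sub0r normrN.
have := up i; have := p_ge0 i; rewrite !expr2 in pee *.
case: (leP 1 (u i)) => u1 p0i upi.
- have : u i * u i <= 2 * p i * u i by nra.
  nra.
- nra.
Unshelve. all: by end_near.
Qed.

Lemma ultra_cvg_bounded {R : realType} {T : Type} (G : set_system T) (u : T -> R) (M : R) :
  UltraFilter G -> G [set i | `|u i| <= M] -> cvg (u @ G).
Proof.
move=> GU GM; have : G (u @^-1` [set` `[- M, M]]).
  by apply: filterS GM => i /=; rewrite in_itv /= -ler_norml.
move=> /(@segment_compact R (- M) M (u @ G)) [p [_ Gp]]; apply/cvg_ex; exists p.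
move=> N Np /=; have [//|GnN] := in_ultra_setVsetC (u @^-1` N) GU.
by have [x []] := Gp (~` N) N GnN Np.
Qed.

(* If [F] misses [h^-1 N], the filter generated by [F] and the complement of
   [h^-1 N] is proper, and an ultrafilter refining it contradicts the hypothesis. *)
Lemma cvg_ultra {T : Type} {Y : topologicalType} (F : set_system T) {PF : ProperFilter F}
    (h : T -> Y) (l : Y) :
  (forall G, UltraFilter G -> F `<=` G -> h @ G --> l) -> h @ F --> l.
Proof.
move=> hG N Nl; suff : F (h @^-1` N) by []; apply: contrapT => nFN.
pose B A := A `&` ~` (h @^-1` N).
have FB : ProperFilter (filter_from F B).
  apply: filter_from_proper => [|A FA].
    apply: filter_from_filter => [|A C FA FC]; first by exists setT; exact: filterT.
    by exists (A `&` C); [exact: filterI | move=> x [[Ax Cx] nNx]].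
  apply: contrapT => nBA; apply: nFN; apply: filterS FA => x Ax.
  by apply: contrapT => nNx; apply: nBA; exists x.
have [G [GU FBG]] := ultraFilterLemma FB.
have FG : F `<=` G by move=> A FA; apply: FBG; exists A => // x [].
have GnN : G (~` h @^-1` N) by apply: FBG; exists setT; [exact: filterT | move=> x []].
have GN : G (h @^-1` N) by exact: hG G GU FG N Nl.
by have [x []] := filter_ex (filterI GnN GN).
Qed.

Section Dual.
Context {R : realType} {X : normedModType R}.
Implicit Types (f g : X -> R) (x y : X).

Lemma dual0 f : is_dual f -> f 0 = 0.
Proof. by move=> [lf _]; have := lf 1 0 0; rewrite scale1r addr0 mul1r; lra. Qed.

Lemma dualZ f a x : is_dual f -> f (a *: x) = a * f x.
Proof. by move=> hf; have := hf.1 a x 0; rewrite !addr0 dual0 // addr0. Qed.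

Lemma dualD f x y : is_dual f -> f (x + y) = f x + f y.
Proof. by move=> hf; have := hf.1 1 x y; rewrite scale1r mul1r. Qed.

Lemma dualN f x : is_dual f -> f (- x) = - f x.
Proof. by move=> hf; rewrite -scaleN1r dualZ // mulN1r. Qed.

Lemma dualB f x y : is_dual f -> f (x - y) = f x - f y.
Proof. by move=> hf; rewrite dualD // dualN. Qed.

Lemma is_dualB f g : is_dual f -> is_dual g -> is_dual (fun x => f x - g x).
Proof.
move=> hf hg; split=> [a x y|x]; first by rewrite hf.1 hg.1 mulrBr addrACA opprD.
by apply: cvgB; [exact: hf.2 | exact: hg.2].
Qed.

Lemma is_dualZ f a : is_dual f -> is_dual (fun x => a * f x).
Proof.
move=> hf; split=> [b x y|x]; first by rewrite hf.1 mulrDr mulrCA.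
exact: cvgMl_tmp (hf.2 x).
Qed.

(* Continuity at [0] maps the ball of radius [r] into [(-1, 1)]: hence the bound [2 / r]. *)
Lemma dual_ubound f : is_dual f ->
  has_ubound [set `|f x| | x in [set x | `|x| <= 1]].
Proof.
move=> hf; have /cvgrPdist_lt /(_ 1 ltr01) /nbhs_ballP [r r0 Hr] := hf.2 0.
exists (2 / r) => _ [x /= x1 <-].
have r2 : 0 < r / 2 by rewrite divr_gt0.
have : ball (0 : X) r ((r / 2) *: x).
  rewrite -ball_normE /= sub0r normrN normrZ gtr0_norm //.
  by rewrite (le_lt_trans (ler_piMr _ x1)) ?ltW // ltr_pdivrMr // ltr_pMr // ltr1n.
move=> /Hr /=; rewrite dual0 // sub0r normrN dualZ // normrM gtr0_norm // => h.
rewrite ler_pdivlMr //; nra.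
Qed.

Lemma dnorm_ge0 f : is_dual f -> 0 <= dnorm f.
Proof.
move=> hf; apply: le_trans (normr_ge0 (f 0)) _; apply: (ub_le_sup (dual_ubound hf)).
by exists 0; rewrite //= normr0.
Qed.

Lemma dual_le_dnorm f x : is_dual f -> `|f x| <= dnorm f * `|x|.
Proof.
move=> hf; have [->|x0] := eqVneq x 0; first by rewrite dual0 // !normr0 mulr0.
have nx : 0 < `|x| by rewrite normr_gt0.
rewrite -ler_pdivrMr //.
have -> : `|f x| / `|x| = `|f (`|x|^-1 *: x)| by rewrite dualZ // normrM normfV normr_id mulrC.
rewrite /dnorm; apply: (ub_le_sup (dual_ubound hf)); exists (`|x|^-1 *: x) => //=.
by rewrite normrZ normfV normr_id mulVf // gt_eqF.
Qed.

Lemma dnorm_le f c : 0 <= c -> (forall x, `|f x| <= c * `|x|) -> dnorm f <= c.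
Proof.
move=> c0 fc; apply: ge_sup; first by exists `|f 0|, 0; rewrite //= normr0.
by move=> _ [x /= x1 <-]; apply: le_trans (fc x) _; rewrite ler_piMr.
Qed.

Lemma Jeps_ge0 s y g : Jeps s y g -> 0 <= s.
Proof. by case=> hg /(_ y); rewrite subrr dual0 // addr0 lerDl. Qed.

End Dual.

Section DualityMap.
Context {R : realType} {X : normedModType R} (v : X) (Jv : X -> R).
Hypothesis hJ : Jeps 0 v Jv.

Lemma Jeps0_le x : Jv x <= `|v| * `|x|.
Proof.
apply: (@ler_addgt0Mr _ _ _ (`|x| ^+ 2 / 2)) => [|s s0].
  by rewrite divr_ge0 ?exprn_ge0.
have := hJ.2 (v + s *: x); rewrite addrAC subrr add0r dualZ ?addr0; last exact: hJ.1.
have h1 : `|v + s *: x| <= `|v| + s * `|x|.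
  by apply: le_trans (ler_normD _ _) _; rewrite normrZ gtr0_norm.
have : `|v + s *: x| ^+ 2 <= (`|v| + s * `|x|) ^+ 2.
  by rewrite lerXn2r // nnegrE // addr_ge0 // mulr_ge0 // ltW.
by have := normr_ge0 x; have := normr_ge0 v; nra.
Qed.

Lemma Jeps0_norm x : `|Jv x| <= `|v| * `|x|.
Proof.
rewrite ler_norml Jeps0_le andbT -(normrN x) lerNl -dualN; last exact: hJ.1.
exact: Jeps0_le.
Qed.

Lemma Jeps0_self : Jv v = `|v| ^+ 2.
Proof.
apply/eqP; rewrite eq_le {1}expr2 Jeps0_le /=.
apply: (@ler_addgt0Mr _ _ _ (`|v| ^+ 2 / 2)) => [|s s0].
  by rewrite divr_ge0 ?exprn_ge0.
have := hJ.2 ((1 - s) *: v).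
have -> : (1 - s) *: v - v = (- s) *: v.
  by rewrite scalerBl scale1r addrAC subrr add0r scaleNr.
rewrite dualZ; last exact: hJ.1.
rewrite normrZ exprMn real_normK ?num_real // addr0 => h; nra.
Qed.

Lemma Jeps_lower (t : R) (w : X) (z : X -> R) : Jeps t w z ->
  `|w| ^+ 2 / 2 + `|v| ^+ 2 / 2 - t - dnorm (fun x => z x - Jv x) * (`|v| + `|w|)
    <= Jv w.
Proof.
move=> hz; have dzJ := is_dualB hz.1 hJ.1.
have := hz.2 v; rewrite dualB; last exact: hz.1.
have := dual_le_dnorm v dzJ; have := dual_le_dnorm w dzJ.
by rewrite !ler_norml Jeps0_self => /andP [_ zw] /andP [zv _]; lra.
Qed.

Lemma Jeps_norm_gap (t : R) (w : X) (z : X -> R) : Jeps t w z ->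
  (`|w| - `|v|) ^+ 2 / 2 <= t + dnorm (fun x => z x - Jv x) * (`|v| + `|w|).
Proof.
move=> /Jeps_lower; have := Jeps0_le w; rewrite sqrrB; lra.
Qed.
End DualityMap.

Section Bidual.
Context {R : realType} {X : normedModType R}.

Definition dual_linear (Phi : (X -> R) -> R) : Prop :=
  forall (a : R) (f g : X -> R), is_dual f -> is_dual g ->
    Phi (fun x => a * f x + g x) = a * Phi f + Phi g.

Lemma dual_linearZ Phi a f : dual_linear Phi -> is_dual f ->
  Phi (fun x => a * f x) = a * Phi f.
Proof.
move=> lin hf; have d0 : is_dual (fun _ : X => 0 : R).
  by split=> [b x y|x]; [rewrite mulr0 addr0 | exact: cvg_cst].
have Phi0 : Phi (fun=> 0) = 0.
  by have := lin 1 _ _ d0 d0 => /=; rewrite !mul1r addr0; lra.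
have := lin a _ _ hf d0; rewrite Phi0 addr0 => <-.
by congr Phi; apply: funext => x; rewrite addr0.
Qed.

Lemma bnorm_attained (Phi : (X -> R) -> R) (c : R) (f0 : X -> R) : 0 <= c ->
  (forall f, is_dual f -> `|Phi f| <= c * dnorm f) ->
  is_dual f0 -> dnorm f0 <= 1 -> Phi f0 = c -> bnorm Phi = c.
Proof.
move=> c0 Phic hf0 f01 Phif0.
have ub : ubound [set `|Phi f| | f in [set f | is_dual f /\ dnorm f <= 1]] c.
  by move=> _ [f [hf f1] <-]; apply: le_trans (Phic f hf) _; rewrite ler_piMr.
apply/eqP; rewrite eq_le ge_sup /=; last 2 first.
- by exists `|Phi f0|, f0.
- exact: ub.
have -> : c = `|Phi f0| by rewrite Phif0 ger0_norm.
by apply: (ub_le_sup (ex_intro _ c ub)); exists f0.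
Qed.

Lemma bidual_eq_eval (v : X) (Jv : X -> R) (Phi : (X -> R) -> R) :
  @bidual_strictly_convex R X -> Jeps 0 v Jv -> v != 0 -> dual_linear Phi ->
  (forall f, is_dual f -> `|Phi f| <= `|v| * dnorm f) -> Phi Jv = `|v| ^+ 2 ->
  forall f, is_dual f -> Phi f = f v.
Proof.
move=> Hbsc hJ v0 lin Phiv PhiJ f hf.
have a0 : 0 < `|v| by rewrite normr_gt0.
pose phi g := `|v|^-1 * Phi g; pose psi (g : X -> R) := `|v|^-1 * g v.
pose f0 x := `|v|^-1 * Jv x.
have hf0 : is_dual f0 by exact: is_dualZ hJ.1.
have f01 : dnorm f0 <= 1.
  apply: dnorm_le => // x; rewrite normrM normfV normr_id mul1r ler_pdivrMl //.
  exact: Jeps0_norm.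
have phi_le g : is_dual g -> `|phi g| <= 1 * dnorm g.
  by move=> hg; rewrite normrM normfV normr_id mul1r ler_pdivrMl // Phiv.
have psi_le g : is_dual g -> `|psi g| <= 1 * dnorm g.
  by move=> hg; rewrite normrM normfV normr_id mul1r ler_pdivrMl // mulrC dual_le_dnorm.
have phi_f0 : phi f0 = 1.
  rewrite /phi /f0 dual_linearZ //; last exact: hJ.1.
  by rewrite PhiJ expr2 mulKf ?mulVf ?gt_eqF.
have psi_f0 : psi f0 = 1.
  by rewrite /psi /f0 (Jeps0_self hJ) expr2 mulKf ?mulVf ?gt_eqF.
have Bphi : is_bidual phi.
  by split=> [b g h hg hh|]; [rewrite /phi lin // mulrDr mulrCA | exists 1].
have Bpsi : is_bidual psi.
  by split=> [b g h hg hh|]; [rewrite /psi mulrDr mulrCA | exists 1].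
have N1 := bnorm_attained ler01 phi_le hf0 f01 phi_f0.
have N2 := bnorm_attained ler01 psi_le hf0 f01 psi_f0.
have N3 : bnorm (fun g => phi g + psi g) = 2.
  apply: (bnorm_attained _ _ hf0 f01) => [|g hg|]; first exact: ler0n.
    apply: le_trans (ler_normD _ _) _; rewrite -[2]/(1 + 1) mulrDl.
    exact: lerD (phi_le g hg) (psi_le g hg).
  by rewrite phi_f0 psi_f0.
have /(congr1 ( *%R `|v|)) := Hbsc _ _ Bphi Bpsi N1 N2 N3 f hf.
by rewrite !mulVKf ?gt_eqF.
Qed.
End Bidual.

Section WeakLimit.
Context {R : realType} {X : normedModType R} (v : X) (Jv : X -> R).
Hypotheses (Hbsc : @bidual_strictly_convex R X) (hJ : Jeps 0 v Jv) (hv : v != 0).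
Context {T : Type} (F : set_system T) {PF : ProperFilter F} (w : T -> X).
Hypotheses (w_norm : (fun i => `|w i|) @ F --> `|v|)
  (w_Jv : (fun i => Jv (w i)) @ F --> `|v| ^+ 2).

Lemma ultra_cvg_eval (G : set_system T) : UltraFilter G -> F `<=` G ->
  forall f, is_dual f -> (fun i => f (w i)) @ G --> f v.
Proof.
move=> GU FG; have toG (u : T -> R) (l : R) : u @ F --> l -> u @ G --> l.
  by move=> ul; apply: cvg_trans ul; exact: cvg_app.
pose L (f : X -> R) : R := lim ((fun i => f (w i)) @ G).
have L_cvg f : is_dual f -> (fun i => f (w i)) @ G --> L f.
  move=> hf; apply: (ultra_cvg_bounded (M := dnorm f * (`|v| + 1))).
  have : \forall i \near G, `|w i| < `|v| + 1.
    by apply: cvgr_lt (toG _ _ w_norm) _ _; rewrite ltrDl.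
  apply: filterS => i wi; apply: le_trans (dual_le_dnorm _ hf) _.
  by rewrite ler_wpM2l ?dnorm_ge0 ?ltW.
have L_lin : dual_linear L.
  move=> a f g hf hg; apply: cvg_lim => //.
  exact: (cvgD (cvgMl_tmp (L_cvg f hf)) (L_cvg g hg)).
have L_le f : is_dual f -> `|L f| <= `|v| * dnorm f.
  move=> hf; have gap_cvg : (fun i => `|f (w i)| - dnorm f * `|w i|) @ G -->
      `|L f| - dnorm f * `|v|.
    by apply: cvgB; [exact: cvg_norm (L_cvg f hf) | exact: cvgMl_tmp (toG _ _ w_norm)].
  rewrite mulrC -subr_le0; apply: (cvgr_to_le gap_cvg).
  by apply: nearW => i; rewrite subr_le0 dual_le_dnorm.
have L_Jv : L Jv = `|v| ^+ 2 by exact: cvg_lim (toG _ _ w_Jv).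
by move=> f hf; rewrite -(bidual_eq_eval Hbsc hJ hv L_lin L_le L_Jv hf); exact: L_cvg.
Qed.

Lemma weak_cvg f : is_dual f -> (fun i => f (w i)) @ F --> f v.
Proof. by move=> hf; apply: cvg_ultra => G GU FG; exact: ultra_cvg_eval. Qed.

End WeakLimit.

Section JepsConvergence.
Context {R : realType} {X : normedModType R} (v : X) (Jv : X -> R).
Hypothesis hJ : Jeps 0 v Jv.
Context {T : Type} (F : set_system T) {FF : Filter F}
  (t : T -> R) (w : T -> X) (z : T -> X -> R).
Hypotheses (hz : forall i, Jeps (t i) (w i) (z i)) (t_cvg : t @ F --> 0)
  (d_cvg : (fun i => dnorm (fun x => z i x - Jv x)) @ F --> 0).

Lemma Jeps_norm_cvg : (fun i => `|w i|) @ F --> `|v|.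
Proof.
pose d i := dnorm (fun x => z i x - Jv x).
have d_ge0 i : 0 <= d i by apply/dnorm_ge0/is_dualB; [exact: (hz i).1 | exact: hJ.1].
have t_ge0 i : 0 <= t i := Jeps_ge0 (hz i).
apply/subr_cvg0/norm_cvg0P.
apply: (cvg0_of_sq_le (p := fun i => 2 * t i + 2 * (2 * `|v| + 1) * d i)).
- by move=> i; exact: normr_ge0.
- by move=> i; rewrite addr_ge0 ?mulr_ge0 ?addr_ge0 ?mulr_ge0 ?ler0n.
- move=> i; have := Jeps_norm_gap hJ (hz i); rewrite -/(d i) -real_normK ?num_real //.
  set u := `| `|w i| - `|v| |.
  have : `|w i| <= `|v| + u by rewrite -lerBlDl ler_norm.
  have a0 := normr_ge0 v; have u0 : 0 <= u := normr_ge0 _.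
  have := mulr_ge0 (t_ge0 i) u0; have := mulr_ge0 (d_ge0 i) u0.
  have := mulr_ge0 (mulr_ge0 a0 (d_ge0 i)) u0; have := d_ge0 i.
  nra.
- rewrite -[X in _ --> X](_ : 2 * 0 + 2 * (2 * `|v| + 1) * 0 = 0); last first.
    by rewrite !mulr0 addr0.
  by apply: cvgD; exact: cvgMl_tmp.
Qed.

Lemma Jeps_value_cvg : (fun i => Jv (w i)) @ F --> `|v| ^+ 2.
Proof.
pose d i := dnorm (fun x => z i x - Jv x).
apply: (squeeze_cvgr
  (f := fun i => `|w i| * `|w i| / 2 + `|v| ^+ 2 / 2 - t i - d i * (`|v| + `|w i|))
  (h := fun i => `|v| * `|w i|)).
- by apply: nearW => i; rewrite -expr2 Jeps_lower ?Jeps0_le.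
- rewrite -[X in _ --> X](_ : `|v| * `|v| / 2 + `|v| ^+ 2 / 2 - 0 - 0 * (`|v| + `|v|)
      = `|v| ^+ 2); last by rewrite mul0r !subr0 -expr2 -splitr.
  apply: cvgB; first apply: cvgB; first apply: cvgD.
  - by apply: cvgMr_tmp; apply: cvgM; exact: Jeps_norm_cvg.
  - exact: cvg_cst.
  - exact: t_cvg.
  - by apply: cvgM; [exact: d_cvg | apply: cvgD; [exact: cvg_cst | exact: Jeps_norm_cvg]].
- by rewrite expr2; exact: cvgMl_tmp Jeps_norm_cvg.
Qed.
End JepsConvergence.

Unset Implicit Arguments.

Theorem lemma4p1 (R : realType) (X : completeNormedModType R)
  (Hdsc : @dual_strictly_convex R X)
  (Hbsc : @bidual_strictly_convex R X)
  (HwKK : @w_Kadec_Klee R X)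
  (HwsKK : @wstar_Kadec_Klee R X)
  (v : X) (hv : v != 0)
  (I : dirset) (t : I -> R) (ht_pos : forall i, 0 < t i) (ht0 : net_cvg t 0)
  (w : I -> X) :
  (exists (zs : I -> X -> R) (Jv : X -> R),
      Jeps 0 v Jv /\
      (forall i, Jeps (t i) (w i) (zs i)) /\
      net_cvg (fun i => dnorm (fun x => zs i x - Jv x)) 0) ->
  exists (K : dirset) (phi : K -> I),
    cofinal_map phi /\ net_cvg (fun k => `|w (phi k) - v|) 0.
Proof.
move=> [zs [Jv [hJ [hz /net_cvgE hd]]]]; move/net_cvgE in ht0.
have w_norm : (fun i => `|w i|) @ tails I --> `|v|.
  by apply: (Jeps_norm_cvg hJ).
have w_Jv : (fun i => Jv (w i)) @ tails I --> `|v| ^+ 2.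
  by apply: (Jeps_value_cvg hJ).
exists I, id; split; first by move=> i0; exists i0.
apply: HwKK => [f hf|]; apply/net_cvgE; last exact: w_norm.
by apply: (weak_cvg Hbsc hJ hv).
Qed.
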